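(* For every constant $\delta>0$ there exists an instance of correlation clustering on a complete bipartite graph for which the ratio between the minimum cost of a clustering and the optimal value of the LP relaxation is at least $3-\delta$.
   Context: Complete bipartite correlation clustering: $V=V_1\cup V_2$ (disjoint); each pair in $V_1\times V_2$ is a positive edge ($E^+$) or negative edge ($E^-$); pairs inside $V_1$ or inside $V_2$ are not edges. The cost of a clustering (partition of $V$) is the number of positive edges with endpoints in different clusters plus the number of negative edges with endpoints in the same cluster. LP relaxation: variables $x_{uv}=x_{vu}\in[0,1]$ for all $u,v\in V$, $x_{uu}=0$, $x_{uv}+x_{vw}\ge x_{uw}$ for all $u,v,w\in V$; minimize $\sum_{E^+}x_{uv}+\sum_{E^-}(1-x_{uv})$. The integrality gap of an instance is the minimum clustering cost divided by the LP optimum. *)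

From HB Require Import structures.
From mathcomp Require Import all_boot all_order all_algebra.
From mathcomp Require Import reals.
Set Implicit Arguments. Unset Strict Implicit. Unset Printing Implicit Defensive.
Import Order.TTheory GRing.Theory Num.Theory.
Local Open Scope ring_scope.

(* A complete bipartite instance: V1 = 'I_n1, V2 = 'I_n2, V = V1 + V2 (disjoint).
   sgn i j = true  : (i,j) is a positive edge (E+),
   sgn i j = false : (i,j) is a negative edge (E-). *)
Definition vert (n1 n2 : nat) : finType := ('I_n1 + 'I_n2)%type.

(* A clustering (partition of V) is given by a labelling c : V -> nat;
   u, v are in the same cluster iff c u = c v.  Every partition arises so. *)
Definition clust_cost (n1 n2 : nat) (sgn : 'I_n1 -> 'I_n2 -> bool)
    (c : vert n1 n2 -> nat) : nat :=
  (\sum_(i < n1) \sum_(j < n2)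
     (if sgn i j then c (inl i) != c (inr j) else c (inl i) == c (inr j)))%N.

Definition lp_feasible (R : realType) (n1 n2 : nat)
    (x : vert n1 n2 -> vert n1 n2 -> R) : Prop :=
  [/\ forall u v, 0 <= x u v <= 1,
      forall u v, x u v = x v u,
      forall u, x u u = 0
    & forall u v w, x u w <= x u v + x v w].

Definition lp_value (R : realType) (n1 n2 : nat) (sgn : 'I_n1 -> 'I_n2 -> bool)
    (x : vert n1 n2 -> vert n1 n2 -> R) : R :=
  \sum_(i < n1) \sum_(j < n2)
     (if sgn i j then x (inl i) (inr j) else 1 - x (inl i) (inr j)).

From HB Require Import structures.
From mathcomp Require Import all_boot all_order all_algebra.
From mathcomp Require Import reals.
From mathcomp Require Import ring lra.
Set Implicit Arguments. Unset Strict Implicit. Unset Printing Implicit Defensive.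
Import Order.TTheory GRing.Theory Num.Theory.
Local Open Scope ring_scope.

(* The instance is the point-line incidence graph of the affine plane over F_p
   (lines y = m x + b): with n = p^2 points and n lines it is d-regular for
   d = p and has no 4-cycle.  Putting 1/3 on positive edges, 1 on negative
   edges and 2/3 inside each side is LP-feasible of value n d / 3, and this is
   optimal: for a path c-b-a-e of positive edges the pair ce is negative, so
   the triangle inequality charges at least 1 to the four pairs of the path; a
   positive edge lies on 3 (d-1)^2 such paths and a negative pair closes at most
   d of them.  Against this, a clustering saves at most 1 + 2 (K^2 - K) / M on
   the all-singletons cost n d at a right vertex having M left vertices in its
   cluster, K of them adjacent; as two left vertices have at most one common
   neighbour these savings add up to at most 3 n, so every clustering costs at
   least n (d - 3), which is (3 - 9/d) times the LP optimum. *)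

Lemma sum_indicator_le1 (R : numDomainType) (I : finType) (P : pred I) :
  {in P &, forall x y, x = y} -> \sum_i ((P i)%:R : R) <= 1.
Proof.
move=> uniqP; rewrite -natr_sum lern1.
have -> : (\sum_i P i)%N = #|P| by rewrite -sum1_card [RHS]big_mkcond.
by apply/card_le1_eqP => x y xP yP; rewrite (uniqP x y).
Qed.

Lemma ler_twice_sub_pair_ratio (R : realFieldType) (K M : R) :
  0 <= K -> K <= M -> M = 0 \/ 1 <= M ->
  2 * K - M <= 1 + 2 * ((K ^+ 2 - K) / M).
Proof.
move=> K_ge0 KM [M0|M_ge1].
  have K0 : K = 0 by lra.
  by rewrite M0 K0 invr0; lra.
have M_gt0 : 0 < M by lra.
suff : 2 * K - M - 1 <= (K ^+ 2 - K) / M * 2 by lra.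
rewrite -mulrA [_^-1 * 2]mulrC mulrA ler_pdivlMr //.
have := sqr_ge0 (M - K); have := sqr_ge0 (K - 1); nra.
Qed.

Section CorrelationGap.
Variables (R : realType) (n1 n2 : nat) (sgn : 'I_n1 -> 'I_n2 -> bool).

Definition lp_thirds (u v : vert n1 n2) : R :=
  match u, v with
  | inl i, inl i' => if i == i' then 0 else 2/3
  | inr j, inr j' => if j == j' then 0 else 2/3
  | inl i, inr j | inr j, inl i => if sgn i j then 1/3 else 1
  end.

Lemma lp_thirds_feasible : lp_feasible lp_thirds.
Proof.
split.
- by move=> [i|j] [i'|j'] /=; case: ifP => _; apply/andP; split; lra.
- by move=> [i|j] [i'|j'] //=; rewrite eq_sym.
- by move=> [i|j] /=; rewrite eqxx.
move=> [i|j] [i1|j1] [i2|j2] /=;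
  repeat (let H := fresh "H" in case: ifP => H;
          try (move/eqP: H => H; subst; rewrite ?eqxx /=); try congruence);
  try lra;
  repeat match goal with H : is_true (_ == _) |- _ => move/eqP in H end;
  congruence.
Qed.

Definition adj i j : R := (sgn i j)%:R.

Lemma adj01 i j : adj i j = 0 \/ adj i j = 1.
Proof. by rewrite /adj; case: (sgn i j); [right|left]. Qed.

Definition pos_mass (Y : 'I_n1 -> 'I_n2 -> R) : R :=
  \sum_i \sum_j adj i j * Y i j.

Definition neg_mass (Y : 'I_n1 -> 'I_n2 -> R) : R :=
  \sum_i \sum_j (1 - adj i j) * (1 - Y i j).

Lemma lp_value_mass (y : vert n1 n2 -> vert n1 n2 -> R) :
  let Y i j := y (inl i) (inr j) in lp_value sgn y = pos_mass Y + neg_mass Y.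
Proof.
rewrite /lp_value /pos_mass /neg_mass -big_split; apply: eq_bigr => i _.
rewrite -big_split; apply: eq_bigr => j _.
by rewrite /adj; case: (sgn i j) => /=; ring.
Qed.

Variable d : nat.
Hypothesis regular_left : forall i, \sum_j adj i j = d%:R.
Hypothesis regular_right : forall j, \sum_i adj i j = d%:R.
Hypothesis C4_free : forall i i' j j', i != i' -> j != j' ->
  sgn i j -> sgn i' j -> sgn i j' -> sgn i' j' -> False.

Lemma sum_adj : \sum_i \sum_j adj i j = (n1 * d)%:R.
Proof.
under eq_bigr => i _ do rewrite regular_left.
by rewrite sumr_const card_ord -[_ *+ n1]mulr_natl natrM.
Qed.

Lemma regular_card_eq : (0 < d)%N -> n1 = n2.
Proof.
move=> d_gt0; apply/eqP; rewrite -(eqn_pmul2r d_gt0) -(eqr_nat R) -sum_adj.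
rewrite exchange_big; under eq_bigr => j _ do rewrite regular_right.
by rewrite sumr_const card_ord -[_ *+ n2]mulr_natl natrM.
Qed.

Lemma sum_adj_neq_right i j : \sum_j' adj i j' * (j' != j)%:R = d%:R - adj i j.
Proof.
rewrite -(regular_left i) (bigD1 j) //= [in RHS](bigD1 j) //= eqxx mulr0 add0r.
rewrite addrC addrK; apply: eq_bigr => j' /negbTE ->.
by rewrite mulr1.
Qed.

Lemma sum_adj_neq_left i j : \sum_i' adj i' j * (i' != i)%:R = d%:R - adj i j.
Proof.
rewrite -(regular_right j) (bigD1 i) //= [in RHS](bigD1 i) //= eqxx mulr0 add0r.
rewrite addrC addrK; apply: eq_bigr => i' /negbTE ->.
by rewrite mulr1.
Qed.

Lemma adj_mul (i i' : 'I_n1) (j j' : 'I_n2) :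
  adj i j * adj i' j' = (sgn i j && sgn i' j')%:R.
Proof. by rewrite /adj -natrM mulnb. Qed.

Lemma common_nbrs_left_le1 i i' : i != i' -> \sum_j adj i j * adj i' j <= 1.
Proof.
move=> ii'; under eq_bigr => j _ do rewrite adj_mul.
apply: sum_indicator_le1 => j j' /andP[ij i'j] /andP[ij' i'j'].
apply/eqP/negPn/negP => jj'.
exact: C4_free ii' jj' ij i'j ij' i'j'.
Qed.

Lemma common_nbrs_right_le1 j j' : j != j' -> \sum_i adj i j * adj i j' <= 1.
Proof.
move=> jj'; under eq_bigr => i _ do rewrite adj_mul.
apply: sum_indicator_le1 => i i' /andP[ij ij'] /andP[i'j i'j'].
apply/eqP/negPn/negP => ii'.
exact: C4_free ii' jj' ij i'j ij' i'j'.
Qed.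


Definition path3 a b c e : R :=
  adj a b * (adj c b * (c != a)%:R) * (adj a e * (e != b)%:R).

Lemma path3_ge0 a b c e : 0 <= path3 a b c e.
Proof. by rewrite /path3 /adj -!natrM ler0n. Qed.

Lemma path3_adj_ends a b c e : path3 a b c e * adj c e = 0.
Proof.
rewrite /path3 /adj.
case ab: (sgn a b); case cb: (sgn c b); case ca: (c != a);
case ae: (sgn a e); case eb: (e != b); case ce: (sgn c e); rewrite /=; try ring.
by case: (C4_free ca _ cb ab ce ae); rewrite eq_sym eb.
Qed.

Lemma sum_path3_middle a b :
  \sum_c \sum_e path3 a b c e = adj a b * (d%:R - 1) ^+ 2.
Proof.
under eq_bigr => c _ do rewrite /path3 -mulr_sumr sum_adj_neq_right mulrAC.
rewrite -mulr_sumr sum_adj_neq_left.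
by case: (adj01 a b) => ->; ring.
Qed.

Lemma sum_path3_ends_le c e : \sum_a \sum_b path3 a b c e <= d%:R.
Proof.
rewrite exchange_big -(regular_left c); apply: ler_sum => b _.
have -> : \sum_a path3 a b c e =
    adj c b * \sum_(a | a != c) adj a e * adj a b * (e != b)%:R.
  rewrite mulr_sumr [RHS]big_mkcond; apply: eq_bigr => a _.
  by rewrite /path3 [c == a]eq_sym; case: (a != c) => /=; ring.
rewrite -[leRHS]mulr1; apply: ler_wpM2l; first by rewrite /adj ler0n.
have [_|eb] := eqVneq e b.
  by rewrite big1 // => a _; rewrite mulr0.
under eq_bigr => a _ do rewrite mulr1.
apply: le_trans (common_nbrs_right_le1 eb).
by rewrite [leRHS](bigID (fun a => a != c)) /= lerDl sumr_ge0 // => a _;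
   rewrite adj_mul ler0n.
Qed.

Definition path_sum (F : 'I_n1 -> 'I_n2 -> 'I_n1 -> 'I_n2 -> R) : R :=
  \sum_a \sum_b \sum_c \sum_e path3 a b c e * F a b c e.

Lemma path_sumD F G :
  path_sum (fun a b c e => F a b c e + G a b c e) = path_sum F + path_sum G.
Proof.
rewrite /path_sum -big_split; apply: eq_bigr => a _.
rewrite -big_split; apply: eq_bigr => b _.
rewrite -big_split; apply: eq_bigr => c _.
by rewrite -big_split; apply: eq_bigr => e _; rewrite mulrDr.
Qed.

Lemma ler_path_sum F G :
  (forall a b c e, F a b c e <= G a b c e) -> path_sum F <= path_sum G.
Proof.
move=> FG; do 4!(apply: ler_sum => ? _).
by apply: ler_wpM2l; [exact: path3_ge0 | exact: FG].
Qed.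

Lemma path_sum_middle Y :
  path_sum (fun a b _ _ => Y a b) = (d%:R - 1) ^+ 2 * pos_mass Y.
Proof.
rewrite /path_sum /pos_mass mulr_sumr; apply: eq_bigr => a _.
rewrite mulr_sumr; apply: eq_bigr => b _.
under eq_bigr => c _ do rewrite -mulr_suml.
by rewrite -mulr_suml sum_path3_middle; ring.
Qed.

Lemma path_sum_first Y :
  path_sum (fun _ b c _ => Y c b) = (d%:R - 1) ^+ 2 * pos_mass Y.
Proof.
rewrite /path_sum /pos_mass.
transitivity (\sum_a \sum_b \sum_c
    (adj a b * (a != c)%:R) * (adj c b * Y c b * (d%:R - 1))).
  apply: eq_bigr => a _; apply: eq_bigr => b _; apply: eq_bigr => c _.
  rewrite -mulr_suml /path3 -mulr_sumr sum_adj_neq_right [c == a]eq_sym.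
  by case: (adj01 a b) => ->; ring.
under eq_bigr => a _ do rewrite exchange_big.
rewrite exchange_big.
under eq_bigr => c _ do rewrite exchange_big.
rewrite mulr_sumr; apply: eq_bigr => c _; rewrite mulr_sumr; apply: eq_bigr => b _.
rewrite -mulr_suml sum_adj_neq_left.
by case: (adj01 c b) => ->; ring.
Qed.

Lemma path_sum_last Y :
  path_sum (fun a _ _ e => Y a e) = (d%:R - 1) ^+ 2 * pos_mass Y.
Proof.
rewrite /path_sum /pos_mass.
transitivity (\sum_a \sum_b \sum_e
    (adj a b * (b != e)%:R) * (adj a e * Y a e * (d%:R - 1))).
  apply: eq_bigr => a _; apply: eq_bigr => b _; rewrite exchange_big.
  apply: eq_bigr => e _.
  transitivity (\sum_c (adj c b * (c != a)%:R) *
                       (adj a b * (adj a e * (e != b)%:R) * Y a e)).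
    by apply: eq_bigr => c _; rewrite /path3; ring.
  rewrite -mulr_suml sum_adj_neq_left [e == b]eq_sym.
  by case: (adj01 a b) => ->; ring.
under eq_bigr => a _ do rewrite exchange_big.
rewrite mulr_sumr; apply: eq_bigr => a _; rewrite mulr_sumr; apply: eq_bigr => e _.
rewrite -mulr_suml sum_adj_neq_right.
by case: (adj01 a e) => ->; ring.
Qed.

Lemma path_sum_by_ends F :
  path_sum F = \sum_c \sum_e \sum_a \sum_b path3 a b c e * F a b c e.
Proof.
rewrite /path_sum; under eq_bigr => a _ do rewrite exchange_big.
rewrite exchange_big; apply: eq_bigr => c _.
under eq_bigr => a _ do rewrite exchange_big.
by rewrite exchange_big.
Qed.

Lemma path_sum_ends_le Y : (forall i j, Y i j <= 1) ->
  path_sum (fun _ _ c e => 1 - Y c e) <= d%:R * neg_mass Y.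
Proof.
move=> Y_le1; rewrite path_sum_by_ends /neg_mass.
rewrite mulr_sumr; apply: ler_sum => c _; rewrite mulr_sumr; apply: ler_sum => e _.
have neg_ge0 : 0 <= (1 - adj c e) * (1 - Y c e).
  by have := Y_le1 c e; case: (adj01 c e) => ->; nra.
rewrite (eq_bigr (fun a => \sum_b path3 a b c e * ((1 - adj c e) * (1 - Y c e))));
  last first.
  move=> a _; apply: eq_bigr => b _.
  have := path3_adj_ends a b c e; case: (adj01 c e) => ->; first by move=> _; ring.
  by rewrite mulr1 => ->; ring.
under eq_bigr => a _ do rewrite -mulr_suml.
by rewrite -mulr_suml ler_wpM2r // sum_path3_ends_le.
Qed.

Lemma lp_value_thirds : lp_value sgn lp_thirds = (n1 * d)%:R / 3.
Proof.
rewrite /lp_value -sum_adj mulr_suml; apply: eq_bigr => i _.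
rewrite mulr_suml; apply: eq_bigr => j _.
by rewrite /= /adj; case: (sgn i j) => /=; ring.
Qed.

Lemma lp_value_ge (y : vert n1 n2 -> vert n1 n2 -> R) :
  (1 < d)%N -> lp_feasible y -> (n1 * d)%:R / 3 <= lp_value sgn y.
Proof.
move=> d_gt1 [y01 y_sym _ y_tri].
pose Y i j := y (inl i) (inr j).
have Y_le1 i j : Y i j <= 1 by case/andP: (y01 (inl i) (inr j)).
have Y_path c b a e : 1 <= Y c b + Y a b + Y a e + (1 - Y c e).
  have := y_tri (inl c) (inr b) (inr e); have := y_tri (inr b) (inl a) (inr e).
  by rewrite /Y (y_sym (inr b) (inl a)); lra.
have neg_ge0 : 0 <= neg_mass Y.
  apply: sumr_ge0 => i _; apply: sumr_ge0 => j _.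
  by have := Y_le1 i j; case: (adj01 i j) => ->; nra.
have npaths : path_sum (fun _ _ _ _ => 1) = (d%:R - 1) ^+ 2 * (n1 * d)%:R.
  rewrite (path_sum_middle (fun _ _ => 1)) -sum_adj /pos_mass.
  by under eq_bigr => i _ do under eq_bigr => j _ do rewrite mulr1.
have : path_sum (fun _ _ _ _ => 1) <=
    path_sum (fun a b c e => Y c b + Y a b + Y a e + (1 - Y c e)).
  by apply: ler_path_sum => a b c e; exact: Y_path.
rewrite npaths 3!path_sumD path_sum_first path_sum_middle path_sum_last.
have := path_sum_ends_le Y_le1; rewrite lp_value_mass -/Y.
have d_ge2 : 2 <= d%:R :> R by rewrite (ler_nat R 2 d).
set k := (d%:R - 1) ^+ 2; have k_gt0 : 0 < k by rewrite exprn_gt0 //; lra.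
have dk : d%:R <= 3 * k by rewrite /k; nra.
move=> ends paths.
have slack : 0 <= (3 * k - d%:R) * neg_mass Y by apply: mulr_ge0 => //; lra.
have : k * (n1 * d)%:R <= k * (3 * (pos_mass Y + neg_mass Y)) by lra.
by rewrite ler_pM2l //; lra.
Qed.

Section Clustering.
Variable c : vert n1 n2 -> nat.

Definition together i j : R := (c (inl i) == c (inr j))%:R.
Definition mates j : R := \sum_i together i j.
Definition pos_mates j : R := \sum_i together i j * adj i j.
Definition left_cluster_size i : R := \sum_t (c (inl t) == c (inl i))%:R.

Lemma together01 i j : together i j = 0 \/ together i j = 1.
Proof. by rewrite /together; case: (_ == _); [right|left]. Qed.

Lemma pos_mates_ge0 j : 0 <= pos_mates j.
Proof. by apply: sumr_ge0 => i _; rewrite /together /adj -natrM ler0n. Qed.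

Lemma pos_mates_le j : pos_mates j <= mates j.
Proof.
apply: ler_sum => i _.
by case: (together01 i j) => ->; case: (adj01 i j) => ->; lra.
Qed.

Lemma mates_eq0_or_ge1 j : mates j = 0 \/ 1 <= mates j.
Proof.
rewrite /mates /together -natr_sum.
by case: (\sum_i _)%N => [|k]; [left|right; rewrite ler1n].
Qed.

Lemma left_cluster_size_gt0 i : 0 < left_cluster_size i.
Proof.
rewrite /left_cluster_size (bigD1 i) //= eqxx ltr_pwDl //.
by apply: sumr_ge0 => t _; apply: ler0n.
Qed.

Lemma mates_together i j : c (inl i) = c (inr j) -> mates j = left_cluster_size i.
Proof. by move=> cij; apply: eq_bigr => t _; rewrite /together cij. Qed.

Lemma pos_mates_pairs j : pos_mates j ^+ 2 - pos_mates j =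
  \sum_i \sum_i' together i j * adj i j * (together i' j * adj i' j) * (i != i')%:R.
Proof.
rewrite /pos_mates expr2 mulr_suml -sumrB; apply: eq_bigr => i _.
rewrite mulr_sumr (bigD1 i) //= [in RHS](bigD1 i) //= eqxx mulr0 add0r addrAC.
have -> : together i j * adj i j * (together i j * adj i j) = together i j * adj i j.
  by case: (together01 i j) => ->; case: (adj01 i j) => ->; ring.
rewrite subrr add0r; apply: eq_bigr => i' ii'.
by rewrite eq_sym ii' mulr1.
Qed.

Lemma sum_pair_mates_le i i' :
  \sum_j together i j * adj i j * (together i' j * adj i' j) * (i != i')%:R
    <= (c (inl i') == c (inl i))%:R.
Proof.
have [<-|ii'] := eqVneq i i'.
  by rewrite big1 ?ler0n // => j _; rewrite mulr0.
have [cii'|cii'] := eqVneq (c (inl i')) (c (inl i)).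
  apply: le_trans (common_nbrs_left_le1 ii'); apply: ler_sum => j _; rewrite mulr1.
  by case: (together01 i j) => ->; case: (together01 i' j) => ->;
     case: (adj01 i j) => ->; case: (adj01 i' j) => ->; lra.
rewrite big1 // => j _; rewrite /together.
case: eqP => cij; case: eqP => ci'j //=; try ring.
by move/eqP: cii'; rewrite cij ci'j.
Qed.

Lemma sum_pos_mates_pairs_le :
  \sum_j (pos_mates j ^+ 2 - pos_mates j) / mates j <= n1%:R.
Proof.
under eq_bigr => j _ do rewrite pos_mates_pairs mulr_suml.
under eq_bigr => j _ do under eq_bigr => i _ do rewrite mulr_suml.
rewrite (eq_bigr (fun j => \sum_i \sum_i'
    together i j * adj i j * (together i' j * adj i' j) * (i != i')%:R
      / left_cluster_size i)); last first.
  move=> j _; apply: eq_bigr => i _; apply: eq_bigr => i' _.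
  case: (together01 i j) => tij; first by rewrite tij !mul0r.
  rewrite (@mates_together i j) //.
  by move: tij; rewrite /together; case: eqP => // _ /eqP; rewrite eq_sym oner_eq0.
rewrite exchange_big; under eq_bigr => i _ do rewrite exchange_big.
rewrite -[n1 in n1%:R]card_ord -sumr_const; apply: ler_sum => i _.
have size_gt0 := left_cluster_size_gt0 i.
apply: le_trans (_ : \sum_i' (c (inl i') == c (inl i))%:R / left_cluster_size i <= 1).
  apply: ler_sum => i' _; rewrite -mulr_suml ler_pM2r ?invr_gt0 //.
  exact: sum_pair_mates_le.
by rewrite -mulr_suml divff // lt0r_neq0.
Qed.

Lemma clust_cost_mates :
  (clust_cost sgn c)%:R = (n1 * d)%:R - \sum_j (2 * pos_mates j - mates j) :> R.
Proof.
have -> : \sum_j (2 * pos_mates j - mates j) =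
    \sum_i \sum_j (2 * (together i j * adj i j) - together i j).
  rewrite exchange_big; apply: eq_bigr => j _.
  by rewrite /pos_mates /mates mulr_sumr -sumrB.
rewrite -sum_adj /clust_cost natr_sum -sumrB; apply: eq_bigr => i _.
rewrite natr_sum -sumrB; apply: eq_bigr => j _.
by rewrite /together /adj; case: (sgn i j); case: eqP => _ /=; ring.
Qed.

Lemma clust_cost_ge :
  (n1 * d)%:R - n2%:R - 2 * n1%:R <= (clust_cost sgn c)%:R :> R.
Proof.
have gain : \sum_j (2 * pos_mates j - mates j) <= n2%:R + 2 * n1%:R.
  apply: le_trans
    (_ : \sum_j (1 + 2 * ((pos_mates j ^+ 2 - pos_mates j) / mates j)) <= _).
    apply: ler_sum => j _; apply: ler_twice_sub_pair_ratio.
    - exact: pos_mates_ge0.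
    - exact: pos_mates_le.
    - exact: mates_eq0_or_ge1.
  rewrite big_split /= sumr_const card_ord -mulr_sumr -[1 *+ n2]mulr_natl mulr1.
  by rewrite lerD2l ler_wpM2l ?sum_pos_mates_pairs_le.
by rewrite clust_cost_mates; lra.
Qed.

End Clustering.

Lemma integrality_gap_ge (delta : R) :
  (1 < d)%N -> (0 < n1)%N -> 9 <= delta * d%:R ->
  [/\ lp_feasible lp_thirds,
      forall y, lp_feasible y -> lp_value sgn lp_thirds <= lp_value sgn y,
      0 < lp_value sgn lp_thirds
    & forall c, (3 - delta) * lp_value sgn lp_thirds <= (clust_cost sgn c)%:R].
Proof.
move=> d_gt1 n1_gt0 delta_d.
have d_ge2 : 2 <= d%:R :> R by rewrite (ler_nat R 2 d).
have n1_ge1 : 1 <= n1%:R :> R by rewrite (ler_nat R 1 n1).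
have n12 : n2%:R = n1%:R :> R by rewrite (regular_card_eq (ltnW d_gt1)).
split.
- exact: lp_thirds_feasible.
- by move=> y feas_y; rewrite lp_value_thirds; apply: lp_value_ge.
- rewrite lp_value_thirds natrM.
  have : 0 < n1%:R * d%:R :> R by apply: mulr_gt0; lra.
  lra.
- move=> c; have := clust_cost_ge c; rewrite lp_value_thirds n12 natrM => cost.
  have : 0 <= n1%:R * (delta * d%:R - 9) :> R by apply: mulr_ge0; lra.
  lra.
Qed.

End CorrelationGap.

Section AffinePlane.
Variable F : finFieldType.

Definition incident (pt ln : F * F) : bool := pt.2 == ln.1 * pt.1 + ln.2.

Lemma incident_C4_free pt pt' ln ln' : pt != pt' -> ln != ln' ->
  incident pt ln -> incident pt' ln -> incident pt ln' -> incident pt' ln' -> False.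
Proof.
case: pt pt' ln ln' => [x y] [x' y'] [m b] [m' b'].
rewrite /incident /= => pt_neq ln_neq /eqP h1 /eqP h2 /eqP h3 /eqP h4.
have : (m - m') * (x - x') = (m*x+b - (m'*x+b')) - (m*x'+b - (m'*x'+b')) by ring.
rewrite -h1 -h3 -h2 -h4 !subrr ?subr0 => /eqP; rewrite mulf_eq0 !subr_eq0.
case/orP=> [/eqP eq_m | /eqP eq_x].
  subst m'; move: h1; rewrite h3 => /addrI eq_b; subst b'.
  by rewrite eqxx in ln_neq.
by subst x'; rewrite h1 h2 eqxx in pt_neq.
Qed.

Lemma incident_regular_point (R : numDomainType) (pt : F * F) :
  \sum_ln ((incident pt ln)%:R : R) = #|F|%:R.
Proof.
rewrite -(pair_bigA _ (fun m b => ((incident pt (m, b))%:R : R))) /=.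
rewrite -sumr_const; apply: eq_bigr => m _.
rewrite (bigD1 (pt.2 - m * pt.1)) //= big1.
  by rewrite /incident /= [m * _ + _]addrC subrK eqxx addr0.
move=> b b_neq; rewrite /incident /=.
by case: eqP => // eq_pt; case/eqP: b_neq; rewrite eq_pt; ring.
Qed.

Lemma incident_regular_line (R : numDomainType) (ln : F * F) :
  \sum_pt ((incident pt ln)%:R : R) = #|F|%:R.
Proof.
rewrite -(pair_bigA _ (fun x y => ((incident (x, y) ln)%:R : R))) /=.
rewrite -sumr_const; apply: eq_bigr => x _.
rewrite (bigD1 (ln.1 * x + ln.2)) //= big1.
  by rewrite /incident /= eqxx addr0.
by move=> y y_neq; rewrite /incident /= (negbTE y_neq).
Qed.

End AffinePlane.

Theorem theorem4 (R : realType) (delta : R) (hdelta : 0 < delta) :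
  exists (n1 n2 : nat) (sgn : 'I_n1 -> 'I_n2 -> bool)
         (x : vert n1 n2 -> vert n1 n2 -> R),
    [/\ lp_feasible x,
        (forall y : vert n1 n2 -> vert n1 n2 -> R,
            lp_feasible y -> lp_value sgn x <= lp_value sgn y),
        0 < lp_value sgn x
      & forall c : vert n1 n2 -> nat,
          (3 - delta) * lp_value sgn x <= (clust_cost sgn c)%:R].
Proof.
have bound_ge0 : 0 <= 9 / delta by rewrite divr_ge0 // ltW.
have [p] := prime_above (maxn (Num.Def.archi_bound (9 / delta)) 2).
rewrite gtn_max => /andP[bound_p p_gt2] p_prime.
pose N := #|{: 'F_p * 'F_p}|.
pose sgn (i j : 'I_N) := incident (enum_val i) (enum_val j).
exists N, N, sgn, (lp_thirds R sgn).
have card_F : #|'F_p| = p by rewrite card_Fp.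
apply: (integrality_gap_ge (d := #|'F_p|)).
- move=> i; rewrite /adj /sgn.
  rewrite -(big_enum_val (fun ln => ((incident (enum_val i) ln)%:R : R))).
  exact: incident_regular_point.
- move=> j; rewrite /adj /sgn.
  rewrite -(big_enum_val (fun pt => ((incident pt (enum_val j))%:R : R))).
  exact: incident_regular_line.
- by move=> i i' j j' ii' jj'; apply: incident_C4_free; rewrite (inj_eq enum_val_inj).
- by rewrite card_F; apply: leq_trans p_gt2.
- by rewrite /N card_prod card_F muln_gt0 prime_gt0.
rewrite card_F mulrC -ler_pdivrMr //.
apply: ltW; apply: lt_le_trans (archi_boundP bound_ge0) _.
by rewrite ler_nat ltnW.
Qed.
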